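(* Let $p/q$ be a rational number with $q\in\mathbb N$, $\gcd(p,q)=1$, and let $n\in\mathbb N$ with $\gcd(n^2,q)\mid n$. Then for every $y>0$, $$\mathcal R_n\left(\tfrac pq,y\right)=\bigcup_{d\mid n}\mathcal R^{\rm pr}_{n/d}\left(x_d,\tfrac{d^2}{k^2n^2y}\right),$$ for some numbers $x_d\in\mathbb R/\mathbb Z$ depending on $d$ (and on $p,q,n$), where $k=q/\gcd(n,q)$. If moreover $\gcd(n,q)=1$, then for any integers $a,b$ with $an+bq=1$, $$\mathcal R^{\rm pr}_n\left(\tfrac pq,y\right)=\mathcal R^{\rm pr}_n\left(-\tfrac{\overline{pn}\,a}{q},\tfrac{1}{q^2n^2y}\right),$$ where $\overline{pn}$ is an integer representing the multiplicative inverse of $pn$ modulo $q$.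
   Context: $\Gamma=\mathrm{SL}_2(\mathbb Z)$, $\mathcal M=\Gamma\backslash\mathbb H$. For $n\in\mathbb N$, $x\in\mathbb R/\mathbb Z$, $y>0$: $\mathcal R_n(x,y)=\{\Gamma(x+\tfrac jn+iy):0\le j\le n-1\}$ and $\mathcal R^{\rm pr}_n(x,y)=\{\Gamma(x+\tfrac jn+iy):j\in(\mathbb Z/n\mathbb Z)^\times\}$ (for $n=1$, $(\mathbb Z/1\mathbb Z)^\times=\{0\}$). *)

From Stdlib Require Import Reals ZArith Arith.
Open Scope R_scope.

(* A point z = x + i y of the upper half plane is represented by the pair (x, y). *)
Definition hpoint := (R * R)%type.

(* Mobius action of the integer matrix [[a, b], [c, d]] on z = x + i y:
   (a z + b)/(c z + d) = ((a x + b)(c x + d) + a c y^2 + i y (a d - b c)) / |c z + d|^2. *)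
Definition mob (a b c d : Z) (z : hpoint) : hpoint :=
  let (x, y) := z in
  let A := IZR a in let B := IZR b in let C := IZR c in let D := IZR d in
  let den := (C * x + D) ^ 2 + (C * y) ^ 2 in
  (((A * x + B) * (C * x + D) + A * C * y ^ 2) / den,
   ((A * D - B * C) * y) / den).

(* The orbit Gamma z under Gamma = SL_2(Z): a point of M = Gamma \ H, as a set of points. *)
Definition orbit (z : hpoint) : hpoint -> Prop :=
  fun w => exists a b c d : Z, (a * d - b * c = 1)%Z /\ w = mob a b c d z.

(* A set of points of M, as a predicate on orbits. *)
Definition Mset := (hpoint -> Prop) -> Prop.

Definition Rn (n : nat) (x y : R) : Mset :=
  fun O => exists j : nat, (j < n)%nat /\ O = orbit (x + INR j / INR n, y).

(* R^pr_n(x, y) = { Gamma(x + j/n + i y) : j in (Z/nZ)^x }, j taken in 0..n-1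
   (for n = 1 this is j = 0, since gcd 0 1 = 1). *)
Definition Rpr (n : nat) (x y : R) : Mset :=
  fun O => exists j : nat, (j < n)%nat /\ Nat.gcd j n = 1%nat /\
                           O = orbit (x + INR j / INR n, y).

Definition Mset_eq (S T : Mset) : Prop := forall O, S O <-> T O.

From Stdlib Require Import Reals ZArith Lia Lra Znumtheory.
From Stdlib Require Import FunctionalExtensionality PropExtensionality.
Open Scope R_scope.

(* If V > 0 and u a = -1 (mod V), the matrix [[a, -c], [V, -u]] with u a + 1 = c V lies in
   SL_2(Z) and maps u/V + i y to a/V + i/(V^2 y).  Writing p/q + j/n = N_j/(k n), the point
   is therefore equivalent to A/(k m) + i d^2/(k^2 n^2 y), where d = gcd(N_j, n), m = n/d
   and A = -(N_j/d)^-1 (mod k m).  The hypothesis gcd(n^2, q) | n gives gcd(k, n) = 1, so by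
   the Chinese remainder theorem A is a residue mod k depending only on d, glued to k t mod m
   with t a unit of Z/mZ; every j yields such a pair (d, t) and every pair arises.  The second
   identity is the same computation with V = q n, j and t being related by
   j t q^2 = -1 (mod n). *)

Lemma pow2_gt_0 (x : R) : x <> 0 -> 0 < x ^ 2.
Proof. intros Hx. rewrite <- Rsqr_pow2. exact (Rsqr_pos_lt x Hx). Qed.

Lemma mob_den_pos (a b c d : Z) (x y : R) : 0 < y -> (a * d - b * c = 1)%Z ->
  0 < (IZR c * x + IZR d) ^ 2 + (IZR c * y) ^ 2.
Proof.
  intros Hy Hdet. pose proof (pow2_ge_0 (IZR c * x + IZR d)).
  pose proof (pow2_ge_0 (IZR c * y)).
  destruct (Z.eq_dec c 0) as [-> | Hc].
  - assert (Hd : IZR d <> 0) by (apply not_0_IZR; lia).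
    replace (0 * x + IZR d) with (IZR d) by ring. pose proof (pow2_gt_0 _ Hd). lra.
  - assert (Hcy : IZR c * y <> 0).
    { apply Rmult_integral_contrapositive_currified; [exact (not_0_IZR _ Hc) | lra]. }
    pose proof (pow2_gt_0 _ Hcy). lra.
Qed.

Lemma det_mul (a b c d a' b' c' d' : Z) :
  (a * d - b * c = 1)%Z -> (a' * d' - b' * c' = 1)%Z ->
  ((a * a' + b * c') * (c * b' + d * d') - (a * b' + b * d') * (c * a' + d * c') = 1)%Z.
Proof.
  intros Hdet Hdet'.
  transitivity ((a * d - b * c) * (a' * d' - b' * c'))%Z; [ring | rewrite Hdet, Hdet'; ring].
Qed.

Lemma mob_comp (a b c d a' b' c' d' : Z) (x y : R) : 0 < y ->
  (a * d - b * c = 1)%Z -> (a' * d' - b' * c' = 1)%Z ->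
  mob a b c d (mob a' b' c' d' (x, y)) =
  mob (a * a' + b * c') (a * b' + b * d') (c * a' + d * c') (c * b' + d * d') (x, y).
Proof.
  intros Hy Hdet Hdet'.
  pose proof (mob_den_pos _ _ _ _ x y Hy Hdet') as Hpos'.
  pose proof (mob_den_pos _ _ _ _ x y Hy (det_mul _ _ _ _ _ _ _ _ Hdet Hdet')) as Hpos''.
  unfold mob; cbv zeta. rewrite !plus_IZR, !mult_IZR in *.
  revert Hpos' Hpos''.
  generalize (IZR a) (IZR b) (IZR c) (IZR d) (IZR a') (IZR b') (IZR c') (IZR d').
  intros A B C D A' B' C' D' Hpos' Hpos''.
  (* the action identities hold for arbitrary matrices; det = 1 only makes denominators > 0 *)
  assert (Hden : (C * (((A' * x + B') * (C' * x + D') + A' * C' * y ^ 2)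
                       / ((C' * x + D') ^ 2 + (C' * y) ^ 2)) + D) ^ 2
                 + (C * ((A' * D' - B' * C') * y / ((C' * x + D') ^ 2 + (C' * y) ^ 2))) ^ 2
                 = (((C * A' + D * C') * x + (C * B' + D * D')) ^ 2
                    + ((C * A' + D * C') * y) ^ 2) / ((C' * x + D') ^ 2 + (C' * y) ^ 2)).
  { field. lra. }
  rewrite Hden. f_equal; field; lra.
Qed.

Lemma mob_im_pos (a b c d : Z) (x y : R) : 0 < y -> (a * d - b * c = 1)%Z ->
  0 < snd (mob a b c d (x, y)).
Proof.
  intros Hy Hdet. pose proof (mob_den_pos _ _ _ _ x y Hy Hdet).
  unfold mob; cbv zeta; simpl snd.
  rewrite <- !mult_IZR, <- minus_IZR, Hdet. apply Rdiv_lt_0_compat; lra.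
Qed.

Lemma orbit_mob_incl (a b c d : Z) (x y : R) (w : hpoint) : 0 < y -> (a * d - b * c = 1)%Z ->
  orbit (mob a b c d (x, y)) w -> orbit (x, y) w.
Proof.
  intros Hy Hdet (a' & b' & c' & d' & Hdet' & ->).
  rewrite mob_comp by assumption.
  do 4 eexists. split; [exact (det_mul _ _ _ _ _ _ _ _ Hdet' Hdet) | reflexivity].
Qed.

Lemma orbit_mob (a b c d : Z) (x y : R) : 0 < y -> (a * d - b * c = 1)%Z ->
  orbit (mob a b c d (x, y)) = orbit (x, y).
Proof.
  intros Hy Hdet.
  apply functional_extensionality; intro w; apply propositional_extensionality.
  split; [exact (orbit_mob_incl _ _ _ _ _ _ w Hy Hdet) |].
  pose proof (mob_im_pos _ _ _ _ x y Hy Hdet) as Him.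
  destruct (mob a b c d (x, y)) as [X Y] eqn:Hw; simpl in Him.
  assert (Hback : mob d (- b) (- c) a (X, Y) = (x, y)).
  { rewrite <- Hw, mob_comp by (assumption || lia).
    replace (d * a + - b * c)%Z with 1%Z by lia.
    replace (d * b + - b * d)%Z with 0%Z by ring.
    replace (- c * a + a * c)%Z with 0%Z by ring.
    replace (- c * b + a * d)%Z with 1%Z by lia.
    unfold mob; cbv zeta. f_equal; field. }
  rewrite <- Hback. apply orbit_mob_incl; [exact Him | lia].
Qed.

Lemma orbit_shift (m : Z) (x y : R) : 0 < y -> orbit (x + IZR m, y) = orbit (x, y).
Proof.
  intros Hy. rewrite <- (orbit_mob 1 m 0 1 x y Hy) by ring.
  f_equal. unfold mob; cbv zeta. f_equal; field.
Qed.

Lemma orbit_swap (V u a l : Z) (y : R) : (0 < V)%Z -> 0 < y -> (V | u * a + 1)%Z ->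
  orbit (IZR u / IZR V + IZR l, y) = orbit (IZR a / IZR V, 1 / (IZR V ^ 2 * y)).
Proof.
  intros HV Hy [c Hc].
  assert (HVr : IZR V <> 0) by (apply not_0_IZR; lia).
  rewrite orbit_shift by exact Hy.
  rewrite <- (orbit_mob a (- c) V (- u) (IZR u / IZR V) y Hy) by lia.
  f_equal. unfold mob; cbv zeta.
  replace (IZR V * (IZR u / IZR V) + IZR (- u)) with 0 by (rewrite opp_IZR; field; exact HVr).
  replace (IZR a * IZR (- u) - IZR (- c) * IZR V) with 1
    by (rewrite <- !mult_IZR, <- minus_IZR; f_equal; lia).
  f_equal; field; lra.
Qed.

Open Scope Z_scope.

Lemma gcd_pos_r (a b : Z) : 0 < b -> 0 < Z.gcd a b.
Proof.
  intros Hb. pose proof (Z.gcd_nonneg a b).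
  destruct (Z.eq_dec (Z.gcd a b) 0) as [H0 |]; [apply Z.gcd_eq_0_r in H0 |]; lia.
Qed.

Lemma rel_prime_of_inv (x a V : Z) : (V | a * x + 1) -> rel_prime x V.
Proof. intros [c Hc]. apply bezout_rel_prime. exists (- a) c. lia. Qed.

Lemma exists_inv_mod (x V : Z) : 0 < V -> rel_prime x V ->
  exists a, 0 <= a < V /\ rel_prime a V /\ (V | a * x + 1).
Proof.
  intros HV Hx. destruct (rel_prime_bezout _ _ Hx) as [u v Huv].
  assert (Hinv : (V | (- u) mod V * x + 1)).
  { exists (v - (- u / V) * x). pose proof (Z.div_mod (- u) V ltac:(lia)). nia. }
  exists ((- u) mod V). split; [apply Z.mod_pos_bound; lia |].
  split; [| exact Hinv].
  apply (rel_prime_of_inv _ x). rewrite Z.mul_comm. exact Hinv.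
Qed.

Lemma rel_prime_mult_l (a b c : Z) : rel_prime a c -> rel_prime b c -> rel_prime (a * b) c.
Proof. intros Ha Hb. apply rel_prime_sym, rel_prime_mult; apply rel_prime_sym; assumption. Qed.

Lemma rel_prime_add_mul (x k V : Z) : rel_prime x V -> rel_prime (x + k * V) V.
Proof.
  intros Hx. destruct (rel_prime_bezout _ _ Hx) as [u v Huv].
  apply bezout_rel_prime. exists u (v - u * k). lia.
Qed.

Lemma divide_mul_rel_prime (K m z : Z) : rel_prime K m -> (K | z) -> (m | z) -> (K * m | z).
Proof.
  intros HKm [w ->] Hm.
  rewrite Z.mul_comm in Hm. destruct (Gauss m K w Hm (rel_prime_sym _ _ HKm)) as [s ->].
  exists s. ring.
Qed.

Lemma cofactor_rel_prime (n q : Z) : 0 < q -> (Z.gcd (n ^ 2) q | n) ->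
  rel_prime (q / Z.gcd n q) n.
Proof.
  intros Hq Hdiv. pose proof (gcd_pos_r n q Hq) as HC.
  pose proof (Zis_gcd_rel_prime n q (Z.gcd n q) ltac:(lia) ltac:(lia) (Zgcd_is_gcd n q)) as HMK.
  set (C := Z.gcd n q) in *.
  destruct (Z.gcd_divide_l n q) as [M HM]. destruct (Z.gcd_divide_r n q) as [K HK].
  fold C in HM, HK.
  rewrite HK, Z.div_mul in * by lia. rewrite HM, Z.div_mul in HMK by lia.
  assert (HCK : rel_prime C K).
  { constructor; [apply Z.divide_1_l .. |]. intros x HxC HxK.
    assert (HxM : (x | M)).
    { apply (Z.mul_divide_cancel_r _ _ C); [lia |].
      apply (Z.divide_trans _ (Z.gcd (n ^ 2) (K * C))); [| rewrite HM in Hdiv at 2; exact Hdiv].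
      apply Z.gcd_greatest; [| apply Z.mul_divide_mono_r, HxK].
      destruct HxC as [s Hs]. exists (M * M * s). rewrite HM, Z.pow_2_r, Hs at 1. ring. }
    destruct HMK as [_ _ HMK]. exact (HMK x HxM HxK). }
  rewrite HM. apply rel_prime_mult; apply rel_prime_sym; assumption.
Qed.

Close Scope Z_scope.

Lemma Nat2Z_divide (a b : nat) : Nat.divide a b <-> (Z.of_nat a | Z.of_nat b)%Z.
Proof.
  split; [intros [c ->]; exists (Z.of_nat c); lia |].
  intros [c Hc]. destruct (Nat.eq_dec a 0) as [-> | Ha].
  - exists 0%nat. lia.
  - exists (Z.to_nat c). nia.
Qed.

Lemma Nat2Z_gcd (a b : nat) : Z.of_nat (Nat.gcd a b) = Z.gcd (Z.of_nat a) (Z.of_nat b).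
Proof.
  symmetry. apply Zis_gcd_gcd; [lia |]. constructor.
  - apply Nat2Z_divide, Nat.gcd_divide_l.
  - apply Nat2Z_divide, Nat.gcd_divide_r.
  - intros x Ha Hb. apply Z.divide_abs_l.
    rewrite <- (Z2Nat.id (Z.abs x)) by lia.
    apply Nat2Z_divide, Nat.gcd_greatest; apply Nat2Z_divide; rewrite Z2Nat.id by lia;
      apply Z.divide_abs_l; assumption.
Qed.

Lemma Nat_gcd_1_rel_prime (j n : nat) :
  Nat.gcd j n = 1%nat <-> rel_prime (Z.of_nat j) (Z.of_nat n).
Proof. rewrite <- Zgcd_1_rel_prime, <- Nat2Z_gcd. lia. Qed.

Lemma Rn_orbit (n : nat) (x y : R) (O : hpoint -> Prop) :
  Rn n x y O <->
  exists j, (0 <= j < Z.of_nat n)%Z /\ O = orbit (x + IZR j / IZR (Z.of_nat n), y).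
Proof.
  split.
  - intros (j & Hj & ->). exists (Z.of_nat j). split; [lia |]. now rewrite <- !INR_IZR_INZ.
  - intros (j & Hj & ->). exists (Z.to_nat j). split; [lia |].
    now rewrite !INR_IZR_INZ, Z2Nat.id by lia.
Qed.

Lemma Rpr_orbit (n : nat) (x y : R) (O : hpoint -> Prop) :
  Rpr n x y O <->
  exists j, (0 <= j < Z.of_nat n)%Z /\ rel_prime j (Z.of_nat n) /\
            O = orbit (x + IZR j / IZR (Z.of_nat n), y).
Proof.
  split.
  - intros (j & Hj & Hg & ->). exists (Z.of_nat j).
    split; [lia |]. split; [now apply Nat_gcd_1_rel_prime |]. now rewrite <- !INR_IZR_INZ.
  - intros (j & Hj & Hg & ->). exists (Z.to_nat j). split; [lia |].
    split; [apply Nat_gcd_1_rel_prime; now rewrite Z2Nat.id by lia |].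
    now rewrite !INR_IZR_INZ, Z2Nat.id by lia.
Qed.

Section RnDecomposition.

Variables P K r N : Z.
Hypotheses (HK : (0 < K)%Z) (HN : (0 < N)%Z) (HNK : rel_prime N K)
  (Hr : (K | r * (P * N) + 1)%Z).

Lemma Rn_partner_forward (j : Z) :
  exists d m u t, (0 < d)%Z /\ N = (d * m)%Z /\ (P + j * K = d * u)%Z /\
    (0 <= t < m)%Z /\ rel_prime t m /\ (K * m | u * (r * d * N + K * t) + 1)%Z.
Proof.
  pose proof (gcd_pos_r (P + j * K) N HN) as Hd.
  pose proof (Zis_gcd_rel_prime _ _ _ (Z.lt_gt _ _ HN) (Z.le_ge _ _ (Z.gcd_nonneg _ _))
                (Zgcd_is_gcd (P + j * K) N)) as Hum.
  set (d := Z.gcd (P + j * K) N) in *.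
  destruct (Z.gcd_divide_l (P + j * K) N) as [u Hu].
  destruct (Z.gcd_divide_r (P + j * K) N) as [m Hm].
  fold d in Hu, Hm. rewrite Hu, Hm, !Z.div_mul in Hum by lia.
  assert (Hm0 : (0 < m)%Z) by nia.
  assert (HKm : rel_prime K m).
  { apply rel_prime_sym, (rel_prime_div N); [exact HNK | exists d; lia]. }
  assert (HuKm : rel_prime (u * K) m).
  { apply rel_prime_mult_l; assumption. }
  destruct (exists_inv_mod (u * K) m Hm0 HuKm) as (t & Ht & Htm & [e He]).
  destruct Hr as [c Hc].
  exists d, m, u, t. do 4 (split; [lia |]). split; [exact Htm |].
  apply divide_mul_rel_prime; [exact HKm | |].
  - exists (c + r * N * j + u * t)%Z. nia.
  - exists (u * r * d * d + e)%Z. nia.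
Qed.

Lemma Rn_partner_backward (d m t : Z) : (0 < d)%Z -> N = (d * m)%Z -> rel_prime t m ->
  exists u j l, (0 <= j < N)%Z /\ (P + j * K = d * u + K * N * l)%Z /\
    (K * m | u * (r * d * N + K * t) + 1)%Z.
Proof.
  intros Hd HNdm Htm.
  assert (Hm : (0 < m)%Z) by nia.
  assert (HKm : rel_prime K m).
  { apply rel_prime_sym, (rel_prime_div N); [exact HNK | exists d; lia]. }
  assert (HdK : rel_prime d K).
  { apply (rel_prime_div N); [exact HNK | exists m; lia]. }
  assert (HrNK : rel_prime (r * N) K).
  { apply rel_prime_mult_l; [| exact HNK].
    apply (rel_prime_of_inv _ (P * N)). rewrite Z.mul_comm. exact Hr. }
  assert (HAK : rel_prime (r * d * N + t * K) K).
  { apply rel_prime_add_mul. replace (r * d * N)%Z with (r * N * d)%Z by ring.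
    apply rel_prime_mult_l; assumption. }
  assert (HAm : rel_prime (K * t + (r * d * d) * m) m).
  { apply rel_prime_add_mul. apply rel_prime_mult_l; assumption. }
  assert (HA : rel_prime (r * d * N + K * t) (K * m)).
  { apply rel_prime_mult.
    - replace (r * d * N + K * t)%Z with (r * d * N + t * K)%Z by ring. exact HAK.
    - replace (r * d * N + K * t)%Z with (K * t + r * d * d * m)%Z by (rewrite HNdm; ring).
      exact HAm. }
  destruct (exists_inv_mod _ (K * m) ltac:(nia) HA) as (u & _ & _ & Hu).
  (* r N (d u) = -1 = r N P (mod K) *)
  assert (HW : (K | d * u - P)%Z).
  { apply (Gauss _ (r * N)); [| apply rel_prime_sym, HrNK].
    destruct Hu as [e He]. destruct Hr as [c Hc].
    exists (e * m - c - u * t)%Z. nia. }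
  destruct HW as [W HW].
  exists u, (W mod N)%Z, (- (W / N))%Z. split; [apply Z.mod_pos_bound, HN |]. split; [| exact Hu].
  pose proof (Z.div_mod W N ltac:(lia)). nia.
Qed.

Lemma orbit_Rn_pair (j d m u l t : Z) (y : R) : 0 < y -> (0 < d)%Z -> N = (d * m)%Z ->
  (P + j * K = d * u + K * N * l)%Z -> (K * m | u * (r * d * N + K * t) + 1)%Z ->
  orbit (IZR P / (IZR K * IZR N) + IZR j / IZR N, y) =
  orbit (IZR r * IZR d ^ 2 / IZR K + IZR t / IZR m,
         IZR d ^ 2 / (IZR K ^ 2 * IZR N ^ 2 * y)).
Proof.
  intros Hy Hd HNdm Hj Hinv.
  assert (Hm : (0 < m)%Z) by nia.
  assert (HKr : IZR K <> 0) by (apply not_0_IZR; lia).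
  assert (Hdr : IZR d <> 0) by (apply not_0_IZR; lia).
  assert (Hmr : IZR m <> 0) by (apply not_0_IZR; lia).
  apply (f_equal IZR) in Hj. rewrite HNdm in Hj |- *. rewrite !plus_IZR, !mult_IZR in Hj.
  replace (IZR P / (IZR K * IZR (d * m)) + IZR j / IZR (d * m))
    with (IZR u / IZR (K * m) + IZR l).
  2: { replace (IZR P) with (IZR d * IZR u + IZR K * (IZR d * IZR m) * IZR l - IZR j * IZR K)
         by lra.
       rewrite !mult_IZR. field. repeat split; assumption. }
  rewrite (orbit_swap _ _ (r * d * (d * m) + K * t))
    by (nia || exact Hy || (rewrite <- HNdm; exact Hinv)).
  rewrite !plus_IZR, !mult_IZR. f_equal. f_equal; field; repeat split; (assumption || lra).
Qed.

End RnDecomposition.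

Lemma Rn_eq_union_Rpr (P K : Z) (n : nat) :
  (0 < K)%Z -> (0 < n)%nat -> rel_prime P K -> rel_prime (Z.of_nat n) K ->
  exists xd : nat -> R, forall y : R, 0 < y ->
    Mset_eq (Rn n (IZR P / (IZR K * INR n)) y)
      (fun O => exists d : nat, (0 < d)%nat /\ Nat.divide d n /\
         Rpr (n / d) (xd d) (INR d ^ 2 / (IZR K ^ 2 * INR n ^ 2 * y)) O).
Proof.
  intros HK Hn HPK HNK.
  destruct (exists_inv_mod _ K HK (rel_prime_mult_l _ _ _ HPK HNK)) as (r & _ & _ & Hr).
  exists (fun d => IZR r * INR d ^ 2 / IZR K). intros y Hy O.
  rewrite Rn_orbit, !INR_IZR_INZ. split.
  - intros (j & Hj & ->).
    destruct (Rn_partner_forward P K r (Z.of_nat n) ltac:(lia) HNK Hr j)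
      as (d & m & u & t & Hd & HNdm & Hu & Ht & Htm & Hinv).
    exists (Z.to_nat d). split; [lia |].
    split; [apply Nat2Z_divide; rewrite Z2Nat.id by lia; exists m; lia |].
    assert (Hnd : Z.of_nat (n / Z.to_nat d) = m).
    { rewrite Nat2Z.inj_div, Z2Nat.id, HNdm by lia. rewrite Z.mul_comm. apply Z.div_mul. lia. }
    apply Rpr_orbit. exists t. rewrite Hnd, INR_IZR_INZ, Z2Nat.id by lia.
    do 2 (split; [assumption |]).
    apply (orbit_Rn_pair P K r (Z.of_nat n) HK ltac:(lia) j d m u 0 t y); try assumption. lia.
  - intros (d & Hd & [m Hm] & Hpr).
    assert (Hnd : (n / d)%nat = m) by (rewrite Hm; apply Nat.div_mul; lia).
    rewrite Hnd, Rpr_orbit in Hpr. destruct Hpr as (t & Ht & Htm & ->).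
    destruct (Rn_partner_backward P K r (Z.of_nat n) ltac:(lia) ltac:(lia) HNK Hr
                (Z.of_nat d) (Z.of_nat m) t ltac:(lia) ltac:(lia) Htm)
      as (u & j & l & Hj & Hjl & Hinv).
    exists j. split; [exact Hj |]. rewrite INR_IZR_INZ. symmetry.
    apply (orbit_Rn_pair P K r (Z.of_nat n) HK ltac:(lia) j _ _ u l t y); try assumption; lia.
Qed.

Lemma Rn_rational_eq_union_Rpr (p : Z) (q n : nat) :
  (0 < q)%nat -> Z.gcd p (Z.of_nat q) = 1%Z ->
  (0 < n)%nat -> Nat.divide (Nat.gcd (n ^ 2) q) n ->
  let k := (q / Nat.gcd n q)%nat in
  exists xd : nat -> R, forall y : R, 0 < y ->
    Mset_eq (Rn n (IZR p / INR q) y)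
      (fun O => exists d : nat, (0 < d)%nat /\ Nat.divide d n /\
         Rpr (n / d) (xd d) (INR d ^ 2 / (INR k ^ 2 * INR n ^ 2 * y)) O).
Proof.
  intros Hq Hp Hn Hdiv k.
  apply Zgcd_1_rel_prime in Hp.
  apply Nat2Z_divide in Hdiv. rewrite !Nat2Z_gcd, Nat2Z.inj_pow in Hdiv.
  pose proof (cofactor_rel_prime (Z.of_nat n) (Z.of_nat q) ltac:(lia) Hdiv) as HkN.
  pose proof (gcd_pos_r (Z.of_nat n) (Z.of_nat q) ltac:(lia)) as HC.
  assert (Hk : Z.of_nat k = (Z.of_nat q / Z.gcd (Z.of_nat n) (Z.of_nat q))%Z).
  { unfold k. rewrite Nat2Z.inj_div, Nat2Z_gcd. reflexivity. }
  set (C := Z.gcd (Z.of_nat n) (Z.of_nat q)) in *.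
  destruct (Z.gcd_divide_l (Z.of_nat n) (Z.of_nat q)) as [M HM].
  destruct (Z.gcd_divide_r (Z.of_nat n) (Z.of_nat q)) as [K HK]. fold C in HM, HK.
  rewrite HK, Z.div_mul in Hk, HkN by lia.
  assert (HpK : rel_prime (p * M) K).
  { apply rel_prime_mult_l.
    - apply rel_prime_sym, (rel_prime_div (Z.of_nat q)); [apply rel_prime_sym, Hp | exists C; lia].
    - apply (rel_prime_div (Z.of_nat n)); [apply rel_prime_sym, HkN | exists C; lia]. }
  destruct (Rn_eq_union_Rpr (p * M) K n ltac:(nia) Hn HpK (rel_prime_sym _ _ HkN)) as [xd Hxd].
  exists xd. intros y Hy.
  replace (IZR p / INR q) with (IZR (p * M) / (IZR K * INR n)).
  - rewrite (INR_IZR_INZ k), Hk. exact (Hxd y Hy).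
  - assert (IZR C <> 0) by (apply not_0_IZR; lia).
    assert (IZR K <> 0) by (apply not_0_IZR; lia).
    assert (IZR M <> 0) by (apply not_0_IZR; lia).
    rewrite !INR_IZR_INZ, HM, HK, !mult_IZR. field. repeat split; assumption.
Qed.

Section RprReflection.

Variables p q n a b pnbar : Z.
Hypotheses (Hq : (0 < q)%Z) (Hn : (0 < n)%Z) (Hab : (a * n + b * q = 1)%Z)
  (Hpn : (q | p * n * pnbar - 1)%Z).

Lemma rel_prime_q_n : rel_prime q n.
Proof. apply bezout_rel_prime. exists b a. lia. Qed.

Lemma Rpr_pair_congruence (j t : Z) : (n | t * (j * (q * q)) + 1)%Z ->
  (q * n | (p * n + j * q) * (- (pnbar * a) * n + t * q) + 1)%Z.
Proof.
  intros [f Hf]. destruct Hpn as [e He].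
  apply divide_mul_rel_prime; [exact rel_prime_q_n | |].
  - exists (- (e * a * n) + b + p * n * t - j * pnbar * a * n + j * t * q)%Z.
    transitivity (- (a * n) * (p * n * pnbar - 1) + (1 - a * n)
                  + q * (p * n * t - j * pnbar * a * n + j * t * q))%Z; [ring |].
    rewrite He. replace (1 - a * n)%Z with (b * q)%Z by lia. ring.
  - exists (- (p * pnbar * a * n) + p * t * q - j * q * pnbar * a + f)%Z.
    transitivity (n * (- (p * pnbar * a * n) + p * t * q - j * q * pnbar * a)
                  + (t * (j * (q * q)) + 1))%Z; [ring |].
    rewrite Hf. ring.
Qed.

Lemma orbit_Rpr_pair (j t : Z) (y : R) : 0 < y -> (n | t * (j * (q * q)) + 1)%Z ->
  orbit (IZR p / IZR q + IZR j / IZR n, y) =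
  orbit (- (IZR pnbar * IZR a) / IZR q + IZR t / IZR n, 1 / (IZR q ^ 2 * IZR n ^ 2 * y)).
Proof.
  intros Hy Hjt.
  assert (Hqr : IZR q <> 0) by (apply not_0_IZR; lia).
  assert (Hnr : IZR n <> 0) by (apply not_0_IZR; lia).
  pose proof (orbit_swap (q * n) _ _ 0 y ltac:(nia) Hy (Rpr_pair_congruence j t Hjt)) as Hswap.
  rewrite !plus_IZR, !mult_IZR, opp_IZR, !mult_IZR in Hswap.
  replace (IZR p / IZR q + IZR j / IZR n)
    with ((IZR p * IZR n + IZR j * IZR q) / (IZR q * IZR n) + 0) by (field; split; assumption).
  rewrite Hswap. f_equal. f_equal; field; repeat split; (assumption || lra).
Qed.

End RprReflection.

Lemma Rpr_rational_reflection (p a b pnbar : Z) (q n : nat) :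
  (0 < q)%nat -> (0 < n)%nat -> (a * Z.of_nat n + b * Z.of_nat q = 1)%Z ->
  (Z.of_nat q | p * Z.of_nat n * pnbar - 1)%Z ->
  forall y : R, 0 < y ->
    Mset_eq (Rpr n (IZR p / INR q) y)
            (Rpr n (- (IZR pnbar * IZR a) / INR q) (1 / (INR q ^ 2 * INR n ^ 2 * y))).
Proof.
  intros Hq Hn Hab Hpn y Hy O.
  pose proof (rel_prime_q_n (Z.of_nat q) (Z.of_nat n) a b Hab) as Hqn.
  assert (Hpartner : forall j, rel_prime j (Z.of_nat n) -> exists t,
            (0 <= t < Z.of_nat n)%Z /\ rel_prime t (Z.of_nat n) /\
            (Z.of_nat n | t * (j * (Z.of_nat q * Z.of_nat q)) + 1)%Z).
  { intros j Hj. apply exists_inv_mod; [lia |].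
    apply rel_prime_mult_l; [| apply rel_prime_mult_l]; assumption. }
  rewrite !Rpr_orbit, !INR_IZR_INZ. split.
  - intros (j & Hj & Hjn & ->). destruct (Hpartner j Hjn) as (t & Ht & Htn & Hjt).
    exists t. do 2 (split; [assumption |]).
    apply orbit_Rpr_pair with (b := b); try assumption; lia.
  - intros (t & Ht & Htn & ->). destruct (Hpartner t Htn) as (j & Hj & Hjn & Htj).
    exists j. do 2 (split; [assumption |]). symmetry.
    apply orbit_Rpr_pair with (b := b); try assumption; try lia.
    replace (t * (j * (Z.of_nat q * Z.of_nat q)))%Z with (j * (t * (Z.of_nat q * Z.of_nat q)))%Z
      by ring.
    exact Htj.
Qed.

Theorem proposition3p7 (p : Z) (q n : nat) :
  (0 < q)%nat -> Z.gcd p (Z.of_nat q) = 1%Z ->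
  (0 < n)%nat -> Nat.divide (Nat.gcd (n ^ 2) q) n ->
  (let k := (q / Nat.gcd n q)%nat in
   exists xd : nat -> R,
     forall y : R, 0 < y ->
       Mset_eq (Rn n (IZR p / INR q) y)
         (fun O => exists d : nat, (0 < d)%nat /\ Nat.divide d n /\
            Rpr (n / d) (xd d) (INR d ^ 2 / (INR k ^ 2 * INR n ^ 2 * y)) O))
  /\
  (Nat.gcd n q = 1%nat ->
   forall a b : Z, (a * Z.of_nat n + b * Z.of_nat q = 1)%Z ->
   forall pnbar : Z, Z.divide (Z.of_nat q) (p * Z.of_nat n * pnbar - 1) ->
   forall y : R, 0 < y ->
     Mset_eq (Rpr n (IZR p / INR q) y)
             (Rpr n (- (IZR pnbar * IZR a) / INR q) (1 / (INR q ^ 2 * INR n ^ 2 * y)))).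
Proof.
  intros Hq Hp Hn Hdiv. split.
  - exact (Rn_rational_eq_union_Rpr p q n Hq Hp Hn Hdiv).
  - (* gcd(n, q) = 1 already follows from a n + b q = 1 *)
    intros _ a b Hab pnbar Hpn. exact (Rpr_rational_reflection p a b pnbar q n Hq Hn Hab Hpn).
Qed.
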